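(* Let $P$ be a classifier on $\mathbb{R}^n$ and $x \in \mathbb{R}^n$ such that the coverage of $P$ at $x$ is infinite. Then $P(x)$ contains an open halfspace $H$ with $x \in \mathrm{bd}(H)$.
   Context: A classifier is a partition $P$ of $\mathbb{R}^n$ together with a distinguished member $R \in P$, the refinement set, which may be empty and which is both meagre and Lebesgue null; the label set is $L_P = P \setminus\{R\}$. For $x \in \mathbb{R}^n$, $P(x)$ denotes the member of $P$ containing $x$. An anchor for $x$ is an open ball $A = B(c,r)$ with $x \in A \subseteq P(x)$, and its coverage is its radius $r$. The coverage of $P$ at $x$ is infinite if there exists a sequence of anchors for $x$ whose radii are unbounded. $\mathrm{bd}(X)$ denotes the topological boundary of $X$. *)

(* R^n is modelled as 'rV[R]_n, R : realType.
   Its library topology (sup-norm) coincides with the Euclidean topology, so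
   closure / interior / nowhere dense / meagre are the usual ones; balls,
   halfspaces and Lebesgue-null sets are defined explicitly (Euclidean). *)
From HB Require Import structures.
From mathcomp Require Import all_boot all_order all_algebra.
From mathcomp Require Import all_classical all_reals all_analysis.
Set Implicit Arguments. Unset Strict Implicit. Unset Printing Implicit Defensive.
Import Order.TTheory GRing.Theory Num.Theory.
Import numFieldNormedType.Exports.
Local Open Scope classical_set_scope.
Local Open Scope ring_scope.

Section Defs.
Variables (R : realType) (n : nat).
Local Notation V := 'rV[R]_n.

Definition dotp (u v : V) : R := \sum_(i < n) u ord0 i * v ord0 i.
Definition eball (c : V) (r : R) : set V :=
  [set y | dotp (y - c) (y - c) < r ^+ 2 /\ 0 < r].

Definition bd (X : set V) : set V := closure X `\` interior X.

Definition open_halfspace (H : set V) : Prop :=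
  exists (a : V) (b : R), a != 0 /\ H = [set y | b < dotp a y].

Definition nowhere_dense (S : set V) : Prop := interior (closure S) = set0.
Definition meagre (S : set V) : Prop :=
  exists F : nat -> set V, (forall k, nowhere_dense (F k)) /\
    S `<=` \bigcup_k F k.

Definition box (a b : V) : set V :=
  [set y | forall i, a ord0 i <= y ord0 i <= b ord0 i].
Definition lebesgue_null (S : set V) : Prop :=
  forall eps : R, 0 < eps -> exists a b : nat -> V,
    (forall k i, a k ord0 i <= b k ord0 i) /\
    S `<=` \bigcup_k box (a k) (b k) /\
    (forall N, \sum_(k < N) \prod_(i < n) (b k ord0 i - a k ord0 i) <= eps).

Definition classifier (P : set (set V)) (Rf : set V) : Prop :=
  P Rf /\
  (forall A, P A -> A <> Rf -> A !=set0) /\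
  (forall x : V, exists A, P A /\ A x) /\
  (forall A B, P A -> P B -> A <> B -> A `&` B = set0) /\
  meagre Rf /\ lebesgue_null Rf.

(* A is the member P(x) of P containing x; anchors for x *)
Definition anchor (A : set V) (x c : V) (r : R) : Prop :=
  eball c r x /\ eball c r `<=` A.

Definition infinite_coverage (P : set (set V)) (x : V) : Prop :=
  exists (A : set V) (c : nat -> V) (r : nat -> R),
    P A /\ A x /\ (forall k, anchor A x (c k) (r k)) /\
    (forall M : R, exists k, M < r k).

End Defs.

From HB Require Import structures.
From mathcomp Require Import all_boot all_order all_algebra.
From mathcomp Require Import all_classical all_reals all_analysis.
From mathcomp Require Import lra.
Import Order.TTheory GRing.Theory Num.Theory.
Import numFieldNormedType.Exports.
Local Open Scope classical_set_scope.
Local Open Scope ring_scope.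

(* Write the anchors as B(x + r_k u_k, r_k); since x lies in them, |u_k| < 1, so
   along r_k -> oo the directions u_k have a cluster point p.  Expanding
   |y - x - r u|^2 < r^2 shows that once r is large and u is near p, the ball
   contains every y with p.(y - x) > 0, and every y at all when p = 0.  Hence P(x)
   contains the halfspace {y | p.y > p.x} (any halfspace through x if p = 0). *)

Lemma continuous_sum (T : topologicalType) (K : numFieldType)
    (V : normedModType K) (I : Type) (s : seq I) (P : pred I)
    (f : I -> T -> V) :
  (forall i, continuous (f i)) ->
  continuous (fun z => \sum_(i <- s | P i) f i z).
Proof.
move=> f_cont z; rewrite -fct_sumE.
elim/big_ind: _ => [|g h|i _]; [exact: cst_continuous|exact: continuousD|].
exact: f_cont.
Qed.

Lemma compact_cluster_unbounded {R : realType} {T : topologicalType} {I : Type}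
    {K : set T} {u : I -> T} {r : I -> R} :
  compact K -> (forall i, K (u i)) -> (forall M, exists i, M < r i) ->
  exists2 p, K p & forall N M, nbhs p N -> exists2 i, M < r i & N (u i).
Proof.
move=> K_compact Ku r_unbounded.
pose G := filter_from setT (fun M : R => [set i | M < r i]).
have G_proper : ProperFilter G.
  apply: filter_from_proper => [|M _]; last first.
    by have [i] := r_unbounded M; exists i.
  apply: filter_fromT_filter; first by exists 0.
  by move=> M M'; exists (Num.max M M') => i /=; rewrite gt_max => /andP[].
have [p [Kp p_cluster]] := K_compact (u @ G) _ (filterE _ Ku).
exists p => // N M pN.
have uG : (u @ G) (u @` [set i | M < r i]) by exists M => // i Mi; exists i.
by have [_ [[i Mi <-] Nui]] := p_cluster _ _ uG pN; exists i.
Qed.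

Section Dotp.
Context {R : realType} {n : nat}.
Local Notation V := 'rV[R]_n.
Implicit Types (u v w : V).

Lemma dotpC u v : dotp u v = dotp v u.
Proof. by apply: eq_bigr => i _; rewrite mulrC. Qed.

Lemma dotpDl u v w : dotp (u + v) w = dotp u w + dotp v w.
Proof. by rewrite /dotp -big_split; apply: eq_bigr => i _; rewrite mxE mulrDl. Qed.

Lemma dotpZl (a : R) u w : dotp (a *: u) w = a * dotp u w.
Proof. by rewrite /dotp mulr_sumr; apply: eq_bigr => i _; rewrite mxE mulrA. Qed.

Lemma dotpBl u v w : dotp (u - v) w = dotp u w - dotp v w.
Proof. by rewrite -scaleN1r dotpDl dotpZl mulN1r. Qed.

Lemma dotpDr u v w : dotp w (u + v) = dotp w u + dotp w v.
Proof. by rewrite dotpC dotpDl !(dotpC w). Qed.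

Lemma dotpZr (a : R) u w : dotp w (a *: u) = a * dotp w u.
Proof. by rewrite dotpC dotpZl dotpC. Qed.

Lemma dotpBr u v w : dotp w (u - v) = dotp w u - dotp w v.
Proof. by rewrite dotpC dotpBl !(dotpC w). Qed.

Lemma dotp0l v : dotp 0 v = 0.
Proof. by rewrite -(scale0r 0) dotpZl mul0r. Qed.

Lemma dotp0r v : dotp v 0 = 0.
Proof. by rewrite dotpC dotp0l. Qed.

Lemma dotp_ge0 u : 0 <= dotp u u.
Proof. by apply: sumr_ge0 => i _; rewrite -expr2 sqr_ge0. Qed.

Lemma dotp_coord_le u i : u ord0 i ^+ 2 <= dotp u u.
Proof.
rewrite /dotp (bigD1 i) //= -expr2 lerDl.
by apply: sumr_ge0 => j _; rewrite -expr2 sqr_ge0.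
Qed.

Lemma dotp_gt0 u : u != 0 -> 0 < dotp u u.
Proof.
move=> u_neq0; have [i ui_neq0] : exists i, u ord0 i != 0.
  apply/existsP; apply: contraNT u_neq0 => /existsPn ui0.
  by apply/eqP/rowP => i; rewrite mxE; apply/eqP/negPn/ui0.
by apply: lt_le_trans (dotp_coord_le u i); rewrite exprn_even_gt0.
Qed.

Lemma dotp_continuous {T : topologicalType} {f g : T -> V} :
  continuous f -> continuous g -> continuous (fun z => dotp (f z) (g z)).
Proof.
have coord_cont (h : T -> V) i : continuous h -> continuous (fun z => h z ord0 i).
  move=> h_cont z; apply: (@continuous_comp _ _ _ h (fun M : V => M ord0 i)).
  - exact: h_cont.
  - exact: coord_continuous.
move=> f_cont g_cont; apply: continuous_sum => i z.
by apply: continuousM; apply: coord_cont.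
Qed.

Lemma bd_halfspace (a y : V) : a != 0 -> bd [set z | dotp a y < dotp a z] y.
Proof.
move=> a_neq0; split; last by move=> /interior_subset /=; rewrite ltxx.
move=> B /nbhs_ballP [e e_gt0 eB].
have a_gt0 : 0 < `|a| by rewrite normr_gt0.
pose t := e / (2 * `|a|).
have t_gt0 : 0 < t by rewrite divr_gt0 // mulr_gt0.
exists (y + t *: a); split => /=.
  by rewrite dotpDr dotpZr ltrDl mulr_gt0 // dotp_gt0.
apply: eB; rewrite -ball_normE /ball_ /= opprD addrA subrr add0r normrN normrZ.
rewrite gtr0_norm // /t invfM mulrA mulfVK ?gt_eqF //.
by rewrite ltr_pdivrMr // ltr_pMr // ltr1n.
Qed.

Lemma eball_shiftE (x u y : V) (r : R) : 0 < r ->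
  eball (x + r *: u) r y <->
  dotp (y - x) (y - x) < r * (2 * dotp (y - x) u + r * (1 - dotp u u)).
Proof.
move=> r_gt0; rewrite /eball /= opprD addrA; move: (y - x) => Y.
rewrite dotpBl !dotpBr !dotpZl !dotpZr (dotpC u Y).
by split => [[+ _]|?]; [|split]; lra.
Qed.

End Dotp.

Section ExpandingBalls.
Context {R : realType} {n : nat} {I : Type}.
Local Notation V := 'rV[R]_n.
Context {A : set V} {x p : V} {u : I -> V} {r : I -> R}.
Hypothesis r_gt0 : forall i, 0 < r i.
Hypothesis ballsA : forall i, eball (x + r i *: u i) (r i) `<=` A.
Hypothesis p_cluster : forall N M, nbhs p N -> exists2 i, M < r i & N (u i).

Lemma expanding_balls_cover : p = 0 -> A = setT.
Proof.
move=> p0; apply/seteqP; split => // y _; set Y := y - x.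
have near_p : \forall v \near p, - 1 / 4 < dotp Y v /\ dotp v v < 1 / 4.
  apply: filterI.
  - apply: (dotp_continuous (@cst_continuous _ _ Y) (fun=> cvg_id) p
      [set z | - 1 / 4 < z]).
    by apply: lt_nbhsr; rewrite p0 dotp0r; lra.
  - apply: (dotp_continuous (fun=> cvg_id) (fun=> cvg_id) p [set z | z < 1 / 4]).
    apply: lt_nbhsl; rewrite p0 dotp0l; lra.
have [i ri [Yu uu]] := p_cluster _ (4 * (dotp Y Y + 1)) near_p.
apply: (ballsA i); apply/eball_shiftE => //; rewrite -/Y.
have := dotp_ge0 Y; nra.
Qed.

Lemma expanding_balls_halfspace : (forall i, dotp (u i) (u i) < 1) ->
  [set y | dotp p x < dotp p y] `<=` A.
Proof.
move=> u_lt1 y /= pxy; set Y := y - x.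
have Yp_gt0 : 0 < dotp Y p by rewrite dotpC dotpBr subr_gt0.
have near_p : \forall v \near p, dotp Y p / 2 < dotp Y v.
  apply: (dotp_continuous (@cst_continuous _ _ Y) (fun=> cvg_id) p
    [set z | dotp Y p / 2 < z]).
  by apply: lt_nbhsr; rewrite ltr_pdivrMr // ltr_pMr // ltr1n.
have [i ri Yu] := p_cluster _ (dotp Y Y / dotp Y p) near_p.
apply: (ballsA i); apply/eball_shiftE => //; rewrite -/Y.
move: ri; rewrite ltr_pdivrMr // => ri.
have := u_lt1 i; have := r_gt0 i; nra.
Qed.

End ExpandingBalls.

(* In dimension 0 the only box has volume 1 (an empty product), so no set is
   null. *)
Lemma lebesgue_null_dim_gt0 {R : realType} {n : nat} {S : set 'rV[R]_n} :
  lebesgue_null S -> (0 < n)%N.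
Proof.
case: n S => // S /(_ 1 ltr01) [a [b [_ [_ /(_ 2%N)]]]].
rewrite !big_ord_recr !big_ord0 /=; lra.
Qed.

Lemma unbounded_anchors_halfspace {R : realType} {n : nat} {I : Type}
    {A : set 'rV[R]_n} {x : 'rV[R]_n} {c : I -> 'rV[R]_n} {r : I -> R} :
  (0 < n)%N -> (forall i, anchor A x (c i) (r i)) ->
  (forall M, exists i, M < r i) ->
  exists2 a, a != 0 & [set y | dotp a x < dotp a y] `<=` A.
Proof.
move=> n_gt0 anchors r_unbounded.
have r_gt0 i : 0 < r i by have [[_ ->]] := anchors i.
pose u i := (r i)^-1 *: (c i - x).
have c_shift i : c i = x + r i *: u i.
  by rewrite scalerA mulfV ?gt_eqF // scale1r addrC subrK.
have ballsA i : eball (x + r i *: u i) (r i) `<=` A.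
  by rewrite -c_shift; have [] := anchors i.
have u_lt1 i : dotp (u i) (u i) < 1.
  have [+ _] := anchors i; rewrite c_shift eball_shiftE // subrr !dotp0l.
  by have := r_gt0 i; nra.
have u_cube i : [set v : 'rV[R]_n | forall j, `[-1, 1]%classic (v ord0 j)] (u i).
  move=> j; rewrite /= in_itv /= -ler_norml -(@expr_le1 _ 2) //.
  by rewrite real_normK ?num_real // ltW // (le_lt_trans (dotp_coord_le _ j)).
have cube_compact := @rV_compact _ n _ (fun=> @segment_compact R (-1) 1).
have [p _ p_cluster] := compact_cluster_unbounded cube_compact u_cube r_unbounded.
have [p0|p_neq0] := eqVneq p 0.
- exists (const_mx 1).
    by apply/eqP => /rowP /(_ (Ordinal n_gt0)); rewrite !mxE; apply/eqP/oner_neq0.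
  by rewrite (expanding_balls_cover r_gt0 ballsA p_cluster p0).
- by exists p; last exact: expanding_balls_halfspace.
Qed.

Theorem lemma2 (R : realType) (n : nat) (P : set (set 'rV[R]_n))
  (Rf : set 'rV[R]_n) (x : 'rV[R]_n) :
  classifier P Rf -> infinite_coverage P x ->
  forall A : set 'rV[R]_n, P A -> A x ->
  exists H : set 'rV[R]_n, open_halfspace H /\ H `<=` A /\ bd H x.
Proof.
move=> [_ [_ [_ [disjP [_ Rf_null]]]]].
move=> [A0 [c [r [PA0 [A0x [anchors r_unbounded]]]]]] A PA Ax.
have {A PA Ax} -> : A = A0.
  by apply: contrapT => AA0; have : (A `&` A0) x by []; rewrite disjP.
have [a a_neq0 aA0] := unbounded_anchors_halfspace
  (lebesgue_null_dim_gt0 Rf_null) anchors r_unbounded.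
exists [set y | dotp a x < dotp a y]; split; first by exists a, (dotp a x).
by split=> //; exact: bd_halfspace.
Qed.
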